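(* Let $k$ be a binary kernel on a non-empty set $\mathcal X$. Then the relation $\sim_k$ is a partial equivalence relation, i.e., it is (i) symmetric and (ii) transitive.
   Context: A kernel on $\mathcal X$ is a symmetric positive semidefinite function $k:\mathcal X\times\mathcal X\to\mathbb R$. A kernel $k$ is binary if $k(x,y)\in\{0,1\}$ for all $x,y\in\mathcal X$. The relation induced by a binary kernel $k$ is $\sim_k=\{(x,y)\in\mathcal X\times\mathcal X : k(x,y)=1\}$. *)

From Stdlib Require Import Reals List.
Open Scope R_scope.

Definition quad_form {X : Type} (k : X -> X -> R) (n : nat)
  (xs : nat -> X) (cs : nat -> R) : R :=
  fold_right Rplus 0
    (map (fun i => fold_right Rplus 0
       (map (fun j => cs i * cs j * k (xs i) (xs j)) (seq 0 n))) (seq 0 n)).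

Definition is_kernel {X : Type} (k : X -> X -> R) : Prop :=
  (forall x y, k x y = k y x) /\
  (forall (n : nat) (xs : nat -> X) (cs : nat -> R), 0 <= quad_form k n xs cs).

Definition is_binary {X : Type} (k : X -> X -> R) : Prop :=
  forall x y, k x y = 0 \/ k x y = 1.

Definition rel_k {X : Type} (k : X -> X -> R) (x y : X) : Prop := k x y = 1.

(* Testing positive semidefiniteness of a kernel on the points x, y, z with
   coefficients 1, -1, 1 gives 2 k(x,y) + 2 k(y,z) - 2 k(x,z) <= k(x,x) + k(y,y) + k(z,z).
   For a binary kernel with x ~ y and y ~ z the right side is at most 3, so
   k(x,z) >= 1/2, which forces k(x,z) = 1. *)

From Stdlib Require Import Reals Lra.

Section Kernel.

Variables (X : Type) (k : X -> X -> R).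

Lemma kernel_three_point_ineq (hk : is_kernel k) (x y z : X) :
  2 * k x y + 2 * k y z - 2 * k x z <= k x x + k y y + k z z.
Proof.
  destruct hk as [hsym hpsd].
  pose proof (hpsd 3%nat (fun i => match i with 0%nat => x | 1%nat => y | _ => z end)
                         (fun i => match i with 1%nat => -1 | _ => 1 end)) as Q.
  unfold quad_form in Q; simpl in Q.
  rewrite (hsym y x), (hsym z x), (hsym z y) in Q.
  lra.
Qed.

Lemma binary_le1 (hb : is_binary k) (x y : X) : k x y <= 1.
Proof. destruct (hb x y) as [H | H]; lra. Qed.

Lemma rel_k_sym (hk : is_kernel k) (x y : X) : rel_k k x y -> rel_k k y x.
Proof. unfold rel_k; intro H; rewrite (proj1 hk y x); exact H. Qed.

Lemma rel_k_trans (hk : is_kernel k) (hb : is_binary k) (x y z : X) :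
  rel_k k x y -> rel_k k y z -> rel_k k x z.
Proof.
  unfold rel_k; intros Hxy Hyz.
  pose proof (kernel_three_point_ineq hk x y z) as Hineq.
  pose proof (binary_le1 hb x x); pose proof (binary_le1 hb y y);
    pose proof (binary_le1 hb z z).
  destruct (hb x z) as [Hxz | Hxz]; [exfalso; lra | exact Hxz].
Qed.

End Kernel.

Theorem lemma2 (X : Type) (x0 : X) (k : X -> X -> R)
  (hk : is_kernel k) (hb : is_binary k) :
  (forall x y, rel_k k x y -> rel_k k y x) /\
  (forall x y z, rel_k k x y -> rel_k k y z -> rel_k k x z).
Proof.
  split.
  - exact (rel_k_sym X k hk).
  - exact (rel_k_trans X k hk hb).
Qed.
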